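(* For a finite graph $G=(V,E)$ and $z>0$, $$\sup_{\mathbf{x}\in FM(G)}\Phi^B(\mathbf{x};z)=\Phi^B(\mathbf{x}(z);z),$$ where $\mathbf{x}(z)$ is defined from the LABP limits as below.
   Context: $\vec E$: directed edges; $\partial u$: neighbours of $u$ (and, in $\sum_{e\in\partial v}$, the edges incident to $v$); empty sums are $0$. LABP: $m^0_{\vec e}(z)=0$, $m^{t+1}_{u\to v}(z)=z/(1+\sum_{w\in\partial u\setminus v}m^t_{w\to u}(z))$; $Y_{\vec e}(z)=\lim_t m^t_{\vec e}(z)$ (exists); $x_e(z)=Y_{\vec e}(z)Y_{-\vec e}(z)/(z+Y_{\vec e}(z)Y_{-\vec e}(z))$. $FM(G)=\{\mathbf{x}\in\mathbb{R}^E:x_e\ge0,\ \sum_{e\in\partial v}x_e\le1\}$. $\Phi^B(\mathbf{x};z)=(\ln z)\sum_{e\in E}x_e+S^B(\mathbf{x})$ with $S^B(\mathbf{x})=\frac12\sum_{v}\{\sum_{e\in\partial v}(-x_e\ln x_e+(1-x_e)\ln(1-x_e))-2(1-\sum_{e\in\partial v}x_e)\ln(1-\sum_{e\in\partial v}x_e)\}$, $0\ln0=0$. *)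

From Stdlib Require Import Reals List Arith.
Import ListNotations.
Open Scope R_scope.

(* A finite simple graph on vertex set V = {0,...,n-1}, given by a
   symmetric irreflexive boolean adjacency relation. *)
Definition simple_graph (n : nat) (adj : nat -> nat -> bool) : Prop :=
  (forall u v, adj u v = adj v u) /\ (forall u, adj u u = false).

Definition lsum {A : Type} (f : A -> R) (l : list A) : R :=
  fold_right (fun a s => f a + s) 0 l.

Definition nbrs (n : nat) (adj : nat -> nat -> bool) (u : nat) : list nat :=
  filter (fun w => adj u w) (seq 0 n).

Definition edges (n : nat) (adj : nat -> nat -> bool) : list (nat * nat) :=
  flat_map (fun u => map (fun v => (u, v))
                        (filter (fun v => andb (Nat.ltb u v) (adj u v)) (seq 0 n)))
           (seq 0 n).

(* A vector x in R^E is a function x : nat -> nat -> R, whose value on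
   the edge {u,v} is x (min u v) (max u v). *)
Definition xe (x : nat -> nat -> R) (u v : nat) : R :=
  x (Nat.min u v) (Nat.max u v).

Definition FM (n : nat) (adj : nat -> nat -> bool) (x : nat -> nat -> R) : Prop :=
  (forall e, In e (edges n adj) -> 0 <= x (fst e) (snd e)) /\
  (forall v, (v < n)%nat -> lsum (fun w => xe x v w) (nbrs n adj v) <= 1).

Definition xlnx (t : R) : R := if Rle_dec t 0 then 0 else t * ln t.

Definition SB (n : nat) (adj : nat -> nat -> bool) (x : nat -> nat -> R) : R :=
  / 2 * lsum (fun v =>
      lsum (fun w => - xlnx (xe x v w) + xlnx (1 - xe x v w)) (nbrs n adj v)
      - 2 * xlnx (1 - lsum (fun w => xe x v w) (nbrs n adj v)))
    (seq 0 n).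

Definition PhiB (n : nat) (adj : nat -> nat -> bool) (x : nat -> nat -> R) (z : R) : R :=
  ln z * lsum (fun e => x (fst e) (snd e)) (edges n adj) + SB n adj x.

(* LABP messages: labp z t u v = m^t_{u->v}(z). *)
Fixpoint labp (n : nat) (adj : nat -> nat -> bool) (z : R) (t : nat) (u v : nat) : R :=
  match t with
  | O => 0
  | S t' => z / (1 + lsum (fun w => labp n adj z t' w u)
                          (filter (fun w => negb (Nat.eqb w v)) (nbrs n adj u)))
  end.

Definition xz_of (Y : nat -> nat -> R) (z : R) (u v : nat) : R :=
  Y u v * Y v u / (z + Y u v * Y v u).

(* The proof has three layers.
   1. Local concavity.  For a vertex with incident values p_w the
      "vertex energy"  sum_w (mu_w p_w - 1/2 p_w ln p_w
      + 1/2 (1-p_w) ln (1-p_w)) - (1 - sum p) ln (1 - sum p)  is concave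
      on the simplex {p >= 0, sum p <= 1}.  Its Hessian is not diagonally
      dominated, so concavity rests on a weighted Cauchy-Schwarz (Titu)
      inequality together with superadditivity of y(1-y)/(1-2y).  Hence a
      stationary interior point a is a global maximiser; this is proved
      along the segment from a to p using the mean value theorem.
   2. Fixed point.  The LABP limits are positive and satisfy the BP
      fixed-point equations; from them x(z) lies in FM(G) and the
      multipliers mu_{vw} making x(z) stationary at each vertex satisfy
      mu_{vw} + mu_{wv} = ln z.
   3. Decomposition.  This antisymmetry lets Phi^B(x; z) be rewritten as
      the sum over vertices of the vertex energies of x, so Phi^B is
      maximised vertex by vertex at x(z). *)

From Stdlib Require Import Reals List Arith Lra Lia Psatz Classical.
From Coquelicot Require Import Coquelicot.
Import ListNotations.
Open Scope R_scope.

Lemma lsum_nil {A} (f : A -> R) : lsum f [] = 0.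
Proof. reflexivity. Qed.

Lemma lsum_cons {A} (f : A -> R) a l : lsum f (a :: l) = f a + lsum f l.
Proof. reflexivity. Qed.

Lemma lsum_app {A} (f : A -> R) l1 l2 : lsum f (l1 ++ l2) = lsum f l1 + lsum f l2.
Proof.
  induction l1 as [|a l1 IH]; [rewrite app_nil_l, lsum_nil; ring|].
  rewrite <- app_comm_cons, !lsum_cons, IH; ring.
Qed.

Lemma lsum_ext {A} (f g : A -> R) l :
  (forall x, In x l -> f x = g x) -> lsum f l = lsum g l.
Proof.
  induction l as [|a l IH]; intros H; [reflexivity|].
  rewrite !lsum_cons, H, IH; [reflexivity| |simpl; auto].
  intros; apply H; simpl; auto.
Qed.

Lemma lsum_plus {A} (f g : A -> R) l :
  lsum (fun x => f x + g x) l = lsum f l + lsum g l.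
Proof. induction l as [|a l IH]; [simpl; ring|]. rewrite !lsum_cons, IH; ring. Qed.

Lemma lsum_minus {A} (f g : A -> R) l :
  lsum (fun x => f x - g x) l = lsum f l - lsum g l.
Proof. induction l as [|a l IH]; [simpl; ring|]. rewrite !lsum_cons, IH; ring. Qed.

Lemma lsum_scal {A} (f : A -> R) c l : lsum (fun x => c * f x) l = c * lsum f l.
Proof. induction l as [|a l IH]; [simpl; ring|]. rewrite !lsum_cons, IH; ring. Qed.

Lemma lsum_scalr {A} (f : A -> R) c l : lsum (fun x => f x * c) l = lsum f l * c.
Proof. induction l as [|a l IH]; [simpl; ring|]. rewrite !lsum_cons, IH; ring. Qed.

Lemma lsum_zero {A} (l : list A) : lsum (fun _ => 0) l = 0.
Proof. induction l as [|a l IH]; [reflexivity|]. rewrite lsum_cons, IH; ring. Qed.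

Lemma lsum_le {A} (f g : A -> R) l :
  (forall x, In x l -> f x <= g x) -> lsum f l <= lsum g l.
Proof.
  induction l as [|a l IH]; intros H; [simpl; lra|].
  rewrite !lsum_cons.
  apply Rplus_le_compat; [apply H; simpl; auto|apply IH; intros; apply H; simpl; auto].
Qed.

Lemma lsum_nonneg {A} (f : A -> R) l : (forall x, In x l -> 0 <= f x) -> 0 <= lsum f l.
Proof. intros H. rewrite <- (lsum_zero l). apply lsum_le. auto. Qed.

Lemma lsum_elem {A} (f : A -> R) l w :
  (forall x, In x l -> 0 <= f x) -> In w l -> f w <= lsum f l.
Proof.
  induction l as [|a l IH]; intros H Hw; [destruct Hw|].
  rewrite lsum_cons.
  assert (Ha : 0 <= f a) by (apply H; simpl; auto).
  assert (Hl : 0 <= lsum f l) by (apply lsum_nonneg; intros; apply H; simpl; auto).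
  destruct Hw as [<-|Hw]; [lra|].
  assert (f w <= lsum f l) by (apply IH; auto; intros; apply H; simpl; auto). lra.
Qed.

Lemma lsum_filter {A} (f : A -> R) (P : A -> bool) l :
  lsum f (filter P l) = lsum (fun x => if P x then f x else 0) l.
Proof.
  induction l as [|a l IH]; [reflexivity|].
  cbn [filter]. rewrite (lsum_cons (fun x => if P x then f x else 0)), <- IH.
  destruct (P a); [reflexivity|ring].
Qed.

Lemma lsum_map {A B} (f : B -> R) (g : A -> B) l :
  lsum f (map g l) = lsum (fun x => f (g x)) l.
Proof. induction l as [|a l IH]; [reflexivity|]. cbn [map]. rewrite !lsum_cons, IH. reflexivity. Qed.

Lemma lsum_flat_map {A B} (f : B -> R) (g : A -> list B) l :
  lsum f (flat_map g l) = lsum (fun x => lsum f (g x)) l.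
Proof.
  induction l as [|a l IH]; [reflexivity|].
  cbn [flat_map]. rewrite lsum_app, lsum_cons, IH. reflexivity.
Qed.

Lemma lsum_swap {A B} (f : A -> B -> R) l1 l2 :
  lsum (fun i => lsum (fun j => f i j) l2) l1 = lsum (fun j => lsum (fun i => f i j) l1) l2.
Proof.
  induction l1 as [|a l IH].
  - rewrite lsum_nil. symmetry. apply lsum_zero.
  - rewrite lsum_cons, IH, <- lsum_plus. apply lsum_ext. intros. rewrite lsum_cons. reflexivity.
Qed.

Lemma lsum_remove (f : nat -> R) l w : NoDup l -> In w l ->
  lsum f (filter (fun x => negb (Nat.eqb x w)) l) = lsum f l - f w.
Proof.
  induction l as [|a l IH]; intros Hnd Hw; [destruct Hw|].
  inversion Hnd as [|? ? Hna Hnd']; subst. cbn [filter].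
  destruct (Nat.eqb_spec a w) as [->|Hne]; cbn [negb].
  - rewrite lsum_cons, (filter_ext_in _ (fun _ => true)), List.filter_true; [ring|].
    intros x Hx. destruct (Nat.eqb_spec x w); [subst; contradiction|reflexivity].
  - destruct Hw as [->|Hw]; [congruence|].
    rewrite !lsum_cons, IH by auto. ring.
Qed.

(** On 0 < y < 1/2 the function  curv_recip y = y(1-y)/(1-2y)  is the
   reciprocal of  1/y - 1/(1-y), the curvature (with sign reversed) of
   the edge term  -1/2 y ln y + 1/2 (1-y) ln (1-y). *)

Definition curv_recip (y : R) : R := y * (1 - y) / (1 - 2 * y).

Lemma curv_recip_pos y : 0 < y < /2 -> 0 < curv_recip y.
Proof. intros Hy. unfold curv_recip. apply Rdiv_lt_0_compat; nra. Qed.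

(* curv_recip is superadditive below 1/2; in the variable al = 1 - 2a
   this is  1/al + 1/be <= 1/(al + be - 1) + 1. *)
Lemma curv_recip_superadd a b :
  0 < a -> 0 < b -> a + b < /2 -> curv_recip a + curv_recip b <= curv_recip (a + b).
Proof.
  intros Ha Hb Hab. unfold curv_recip.
  set (al := 1 - 2 * a). set (be := 1 - 2 * b).
  assert (Hal : 0 < al < 1) by (unfold al; lra).
  assert (Hbe : 0 < be < 1) by (unfold be; lra).
  assert (Hs : 0 < al + be - 1) by (unfold al, be; lra).
  replace (a * (1 - a) / al) with (/4 * (/al + 2 * a - 1)) by (unfold al; field; lra).
  replace (b * (1 - b) / be) with (/4 * (/be + 2 * b - 1)) by (unfold be; field; lra).
  replace ((a + b) * (1 - (a + b)) / (1 - 2 * (a + b)))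
    with (/4 * (/(al + be - 1) + 2 * (a + b) - 1)) by (unfold al, be; field; lra).
  assert (Hgap : (/ (al + be - 1) + 1) - (/al + /be)
                 = (al + be) * (1 - al) * (1 - be) / (al * be * (al + be - 1)))
    by (field; lra).
  assert (0 <= (al + be) * (1 - al) * (1 - be) / (al * be * (al + be - 1))).
  { apply Rmult_le_pos; [apply Rmult_le_pos; [apply Rmult_le_pos|]; lra|].
    left; apply Rinv_0_lt_compat.
    apply Rmult_lt_0_compat; [apply Rmult_lt_0_compat|]; lra. }
  lra.
Qed.

Lemma curv_recip_lower r : 0 < r < /2 -> r / 2 <= curv_recip r.
Proof.
  intros H. unfold curv_recip.
  assert (r * (1 - r) / (1 - 2 * r) - r / 2 = (r / 2) / (1 - 2 * r)) by (field; lra).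
  assert (0 < (r / 2) / (1 - 2 * r)) by (apply Rdiv_lt_0_compat; lra). lra.
Qed.

Lemma curv_recip_sum (l : list nat) (y : nat -> R) r :
  0 < r -> (forall w, In w l -> 0 < y w) -> r + lsum y l < /2 ->
  r / 2 + lsum (fun w => curv_recip (y w)) l <= curv_recip (r + lsum y l).
Proof.
  revert r. induction l as [|a l IH]; intros r Hr Hy Hs.
  - rewrite !lsum_nil in *. rewrite !Rplus_0_r in *. apply curv_recip_lower; lra.
  - rewrite !lsum_cons in *.
    assert (Ha : 0 < y a) by (apply Hy; simpl; auto).
    assert (Hl : 0 <= lsum y l) by (apply lsum_nonneg; intros; left; apply Hy; simpl; auto).
    assert (IH' := IH r Hr (fun w Hw => Hy w (or_intror Hw)) ltac:(lra)).
    assert (curv_recip (y a) + curv_recip (r + lsum y l)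
            <= curv_recip (y a + (r + lsum y l))) by (apply curv_recip_superadd; lra).
    replace (r + (y a + lsum y l)) with (y a + (r + lsum y l)) by ring. lra.
Qed.

Lemma titu2 A B u v : 0 < B -> 0 < v -> (A + u) ^ 2 / (B + v) <= A ^ 2 / B + u ^ 2 / v.
Proof.
  intros HB Hv.
  assert (A ^ 2 / B + u ^ 2 / v - (A + u) ^ 2 / (B + v)
          = (A * v - u * B) ^ 2 / (B * v * (B + v))) by (field; lra).
  assert (0 <= (A * v - u * B) ^ 2 / (B * v * (B + v))).
  { apply Rmult_le_pos; [apply pow2_ge_0|].
    left; apply Rinv_0_lt_compat. apply Rmult_lt_0_compat; [apply Rmult_lt_0_compat|]; lra. }
  lra.
Qed.

Lemma titu (l : list nat) (u v : nat -> R) A B :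
  0 < B -> (forall w, In w l -> 0 < v w) ->
  (A + lsum u l) ^ 2 <= (B + lsum v l) * (A ^ 2 / B + lsum (fun w => u w ^ 2 / v w) l).
Proof.
  revert A B. induction l as [|a l IH]; intros A B HB Hv.
  - rewrite !lsum_nil, !Rplus_0_r. right; field; lra.
  - rewrite !lsum_cons.
    assert (Ha : 0 < v a) by (apply Hv; simpl; auto).
    assert (Hl : 0 <= lsum v l) by (apply lsum_nonneg; intros; left; apply Hv; simpl; auto).
    assert (IH' := IH (A + u a) (B + v a) ltac:(lra) (fun w Hw => Hv w (or_intror Hw))).
    assert (C := titu2 A B (u a) (v a) HB Ha).
    replace (A + (u a + lsum u l)) with (A + u a + lsum u l) by ring.
    replace (B + (v a + lsum v l)) with (B + v a + lsum v l) by ring.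
    eapply Rle_trans; [exact IH'|]. apply Rmult_le_compat_l; lra.
Qed.

(* The quadratic form of the Hessian along h, when every y_w <= 1/2:
   every diagonal term is then nonpositive. *)
Lemma hessian_all_small (l : list nat) (y h : nat -> R) :
  (forall w, In w l -> 0 < y w <= /2) -> lsum y l < 1 ->
  lsum (fun w => h w ^ 2 * (/ (1 - y w) - / y w)) l <= 2 * (lsum h l) ^ 2 / (1 - lsum y l).
Proof.
  intros Hy Hs.
  apply Rle_trans with (lsum (fun _ => 0) l).
  - apply lsum_le. intros w Hw. destruct (Hy w Hw).
    assert (/ (1 - y w) <= / y w) by (apply Rinv_le_contravar; lra).
    assert (0 <= h w ^ 2) by apply pow2_ge_0. nra.
  - rewrite lsum_zero. apply Rmult_le_pos.
    + assert (0 <= (lsum h l) ^ 2) by apply pow2_ge_0. lra.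
    + left; apply Rinv_0_lt_compat; lra.
Qed.

(* The same bound when one coordinate y0 exceeds 1/2: its positive
   diagonal term is absorbed by Titu's inequality with weights
   curv_recip (y w), whose total is controlled by superadditivity. *)
Lemma hessian_one_large (l : list nat) (y h : nat -> R) (y0 h0 : R) :
  (forall w, In w l -> 0 < y w) -> /2 < y0 -> y0 + lsum y l < 1 ->
  h0 ^ 2 * (/ (1 - y0) - / y0) + lsum (fun w => h w ^ 2 * (/ (1 - y w) - / y w)) l
  <= 2 * (h0 + lsum h l) ^ 2 / (1 - (y0 + lsum y l)).
Proof.
  intros Hy Hy0 Hs.
  set (r := 1 - (y0 + lsum y l)).
  assert (Hr : 0 < r) by (unfold r; lra).
  assert (HyL : 0 <= lsum y l) by (apply lsum_nonneg; intros; left; auto).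
  assert (Hsmall : forall w, In w l -> 0 < y w < /2).
  { intros w Hw. assert (y w <= lsum y l) by (apply lsum_elem; auto; intros; left; auto).
    specialize (Hy w Hw). lra. }
  assert (Hg : forall w, In w l -> 0 < curv_recip (y w)) by auto using curv_recip_pos.
  rewrite (lsum_ext _ (fun w => -1 * (h w ^ 2 / curv_recip (y w)))), lsum_scal.
  2:{ intros w Hw. destruct (Hsmall w Hw). unfold curv_recip. field. repeat split; lra. }
  set (G := curv_recip (1 - y0)).
  assert (HG : 0 < G) by (apply curv_recip_pos; lra).
  replace (/ (1 - y0) - / y0) with (/ G) by (unfold G, curv_recip; field; repeat split; lra).
  assert (Hweights : r / 2 + lsum (fun w => curv_recip (y w)) l <= G).
  { unfold G. replace (1 - y0) with (r + lsum y l) by (unfold r; ring).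
    apply curv_recip_sum; auto. unfold r; lra. }
  set (H := h0 + lsum h l).
  assert (Hcs := titu l (fun w => -1 * h w) (fun w => curv_recip (y w)) H (r / 2)
                   ltac:(lra) Hg).
  rewrite lsum_scal in Hcs.
  replace (H + -1 * lsum h l) with h0 in Hcs by (unfold H; ring).
  rewrite (lsum_ext (fun w => (-1 * h w) ^ 2 / curv_recip (y w))
                    (fun w => h w ^ 2 / curv_recip (y w))) in Hcs
    by (intros; unfold Rdiv; ring).
  set (X := lsum (fun w => h w ^ 2 / curv_recip (y w)) l) in *.
  assert (HX : 0 <= X).
  { apply lsum_nonneg. intros w Hw. apply Rmult_le_pos; [apply pow2_ge_0|].
    left; apply Rinv_0_lt_compat; auto. }
  assert (HH : 0 <= H ^ 2 / (r / 2)).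
  { apply Rmult_le_pos; [apply pow2_ge_0|left; apply Rinv_0_lt_compat; lra]. }
  assert (h0 ^ 2 <= G * (H ^ 2 / (r / 2) + X)).
  { eapply Rle_trans; [exact Hcs|]. apply Rmult_le_compat_r; lra. }
  assert (h0 ^ 2 * / G <= H ^ 2 / (r / 2) + X).
  { apply (Rmult_le_reg_l G); auto.
    rewrite <- Rmult_assoc, (Rmult_comm G), Rmult_assoc, Rinv_r by lra. lra. }
  replace (2 * H ^ 2 / r) with (H ^ 2 / (r / 2)) by (field; lra).
  lra.
Qed.

Lemma local_hessian (l : list nat) (y h : nat -> R) :
  (forall w, In w l -> 0 < y w) -> lsum y l < 1 ->
  lsum (fun w => h w ^ 2 * (/ (1 - y w) - / y w)) l <= 2 * (lsum h l) ^ 2 / (1 - lsum y l).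
Proof.
  intros Hy Hs.
  destruct (classic (exists w0, In w0 l /\ /2 < y w0)) as [[w0 [Hw0 Hlarge]]|Hno].
  - destruct (in_split _ _ Hw0) as [l1 [l2 ->]].
    assert (Hsplit : forall f : nat -> R, lsum f (l1 ++ w0 :: l2) = f w0 + lsum f (l1 ++ l2))
      by (intros; rewrite !lsum_app, lsum_cons; ring).
    rewrite !Hsplit in *.
    apply hessian_one_large; auto.
    intros w Hw. apply Hy. apply in_app_or in Hw. apply in_or_app. simpl. tauto.
  - apply hessian_all_small; auto.
    intros w Hw. split; auto. apply Rnot_lt_le. intro. apply Hno. eauto.
Qed.

Lemma xlnx_pos u : 0 < u -> xlnx u = u * ln u.
Proof. intros H. unfold xlnx. destruct (Rle_dec u 0); [lra|reflexivity]. Qed.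

Lemma xlnx_nonpos u : u <= 0 -> xlnx u = 0.
Proof. intros H. unfold xlnx. destruct (Rle_dec u 0); [reflexivity|lra]. Qed.

(* |u ln u| <= 2 sqrt u on (0,1), from ln s <= s - 1 at s = 1/sqrt u. *)
Lemma tlnt_bound u : 0 < u < 1 -> Rabs (u * ln u) <= 2 * sqrt u.
Proof.
  intros Hu.
  assert (Hs : 0 < sqrt u) by (apply sqrt_lt_R0; lra).
  assert (Hsq : sqrt u * sqrt u = u) by (apply sqrt_sqrt; lra).
  assert (Hlnu : ln u < 0) by (rewrite <- ln_1; apply ln_increasing; lra).
  assert (Hln : ln u = - 2 * ln (/ sqrt u)).
  { rewrite ln_Rinv by auto. rewrite <- Hsq at 1. rewrite ln_mult by auto. ring. }
  assert (H1 : ln (/ sqrt u) <= / sqrt u - 1).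
  { pose proof (exp_ineq1_le (ln (/ sqrt u))) as He.
    rewrite exp_ln in He by (apply Rinv_0_lt_compat; auto). lra. }
  rewrite Rabs_left by nra. rewrite Hln.
  assert (u * / sqrt u = sqrt u) by (rewrite <- Hsq at 1; field; lra).
  assert (u * ln (/ sqrt u) <= u * (/ sqrt u - 1)) by (apply Rmult_le_compat_l; lra).
  nra.
Qed.

Lemma xlnx_continuous_0 : continuity_pt xlnx 0.
Proof.
  unfold continuity_pt, continue_in, limit1_in, limit_in. intros eps He.
  exists (Rmin 1 ((eps / 2) * (eps / 2))). split; [apply Rmin_pos; nra|].
  intros u [_ Hu]. simpl in *. unfold R_dist in *.
  rewrite (xlnx_nonpos 0), !Rminus_0_r in * by lra.
  destruct (Rle_dec u 0) as [Hn|Hp].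
  - rewrite xlnx_nonpos, Rabs_R0 by auto. lra.
  - assert (Hu1 : u < 1).
    { assert (Rabs u < 1) by (eapply Rlt_le_trans; [exact Hu|apply Rmin_l]).
      rewrite Rabs_right in H by lra. lra. }
    assert (Hu2 : u < (eps / 2) * (eps / 2)).
    { assert (Rabs u < (eps / 2) * (eps / 2)) by (eapply Rlt_le_trans; [exact Hu|apply Rmin_r]).
      rewrite Rabs_right in H by lra. lra. }
    rewrite xlnx_pos by lra.
    eapply Rle_lt_trans; [apply tlnt_bound; lra|].
    assert (sqrt u < sqrt ((eps / 2) * (eps / 2))) by (apply sqrt_lt_1; lra).
    rewrite sqrt_square in H by lra. lra.
Qed.

Lemma xlnx_continuous u : continuous xlnx u.
Proof.
  destruct (Rtotal_order u 0) as [Hn|[->|Hp]].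
  - apply (continuous_ext_loc xlnx (fun _ => 0)); [|apply continuous_const].
    exists (mkposreal (- u) ltac:(lra)). intros y Hy. simpl.
    change (Rabs (y - u) < - u) in Hy. apply Rabs_def2 in Hy.
    symmetry; apply xlnx_nonpos. lra.
  - apply continuity_pt_filterlim, xlnx_continuous_0.
  - apply (continuous_ext_loc xlnx (fun y => y * ln y)).
    + exists (mkposreal u Hp). intros y Hy. simpl.
      change (Rabs (y - u) < u) in Hy. apply Rabs_def2 in Hy.
      symmetry; apply xlnx_pos. lra.
    + apply (ex_derive_continuous (fun y => y * ln y)). auto_derive. lra.
Qed.

Lemma continuous_lsum (l : list nat) (F : nat -> R -> R) t :
  (forall w, In w l -> continuous (F w) t) ->
  continuous (fun s => lsum (fun w => F w s) l) t.
Proof.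
  induction l as [|a l IH]; intros H; [apply (continuous_const 0 t)|].
  apply (continuous_plus (F a) (fun s => lsum (fun w => F w s) l));
    [apply H; simpl; auto|apply IH; intros; apply H; simpl; auto].
Qed.

Lemma is_derive_lsum (l : list nat) (F : nat -> R -> R) (F' : nat -> R) t :
  (forall w, In w l -> is_derive (F w) t (F' w)) ->
  is_derive (fun s => lsum (fun w => F w s) l) t (lsum F' l).
Proof.
  induction l as [|a l IH]; intros H; [apply (is_derive_const 0 t)|].
  apply (is_derive_plus (F a) (fun s => lsum (fun w => F w s) l));
    [apply H; simpl; auto|apply IH; intros; apply H; simpl; auto].
Qed.

(** For a vertex with incident coordinates p_w (w in l) and multipliers
   mu_w, the vertex energy collects the terms of Phi^B attached to it. *)

Definition vertex_energy (l : list nat) (mu p : nat -> R) : R :=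
  lsum (fun w => mu w * p w - /2 * xlnx (p w) + /2 * xlnx (1 - p w)) l
  - xlnx (1 - lsum p l).

Lemma vertex_energy_ext l mu p q :
  (forall w, In w l -> p w = q w) -> vertex_energy l mu p = vertex_energy l mu q.
Proof.
  intros H. unfold vertex_energy. rewrite (lsum_ext p q) by auto.
  f_equal. apply lsum_ext. intros w Hw. rewrite H by auto. reflexivity.
Qed.

Definition seg (a p : nat -> R) (t : R) (w : nat) : R := a w + t * (p w - a w).

Definition seg_dir (l : list nat) (a p : nat -> R) : R := lsum (fun w => p w - a w) l.

Lemma lsum_seg l a p t : lsum (seg a p t) l = lsum a l + t * seg_dir l a p.
Proof. unfold seg, seg_dir. rewrite lsum_plus, lsum_scal. reflexivity. Qed.

Lemma vertex_energy_seg_continuous l mu a p t :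
  continuous (fun s => vertex_energy l mu (seg a p s)) t.
Proof.
  assert (Hy : forall w, continuous (fun s => seg a p s w) t).
  { intros w. apply (ex_derive_continuous (fun s => seg a p s w)). unfold seg. auto_derive. auto. }
  assert (Hx : forall f : R -> R, continuous f t -> continuous (fun s => xlnx (f s)) t).
  { intros f Hf. apply (continuous_comp f xlnx); auto. apply xlnx_continuous. }
  unfold vertex_energy.
  apply (continuous_minus (fun s => lsum _ l) (fun s => xlnx (1 - lsum (seg a p s) l))).
  - apply (continuous_lsum l (fun w s => mu w * seg a p s w - /2 * xlnx (seg a p s w)
                                         + /2 * xlnx (1 - seg a p s w))).
    intros w _.
    apply (continuous_plus (fun s => mu w * seg a p s w - /2 * xlnx (seg a p s w))
                           (fun s => /2 * xlnx (1 - seg a p s w))).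
    + apply (continuous_minus (fun s => mu w * seg a p s w) (fun s => /2 * xlnx (seg a p s w))).
      * apply (continuous_mult (fun _ => mu w)); [apply continuous_const|auto].
      * apply (continuous_mult (fun _ => /2)); [apply continuous_const|auto].
    + apply (continuous_mult (fun _ => /2)); [apply continuous_const|].
      apply Hx, (continuous_minus (fun _ => 1)); [apply continuous_const|auto].
  - apply Hx, (continuous_minus (fun _ => 1)); [apply continuous_const|].
    apply (continuous_lsum l (fun w s => seg a p s w)). auto.
Qed.

(* Closed forms, valid for 0 <= t < 1, of the vertex energy along the
   segment and of its first two derivatives. *)
Definition energy_smooth (l : list nat) (mu a p : nat -> R) (t : R) : R :=
  lsum (fun w => mu w * seg a p t w - /2 * (seg a p t w * ln (seg a p t w))
                 + /2 * ((1 - seg a p t w) * ln (1 - seg a p t w))) l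
  - (1 - (lsum a l + t * seg_dir l a p)) * ln (1 - (lsum a l + t * seg_dir l a p)).

Definition energy_slope (l : list nat) (mu a p : nat -> R) (t : R) : R :=
  lsum (fun w => mu w * (p w - a w) - /2 * ((p w - a w) * (ln (seg a p t w) + 1))
                 - /2 * ((p w - a w) * (ln (1 - seg a p t w) + 1))) l
  + seg_dir l a p * (ln (1 - (lsum a l + t * seg_dir l a p)) + 1).

Definition energy_curv (l : list nat) (a p : nat -> R) (t : R) : R :=
  lsum (fun w => - /2 * ((p w - a w) ^ 2 / seg a p t w)
                 + /2 * ((p w - a w) ^ 2 / (1 - seg a p t w))) l
  - (seg_dir l a p) ^ 2 / (1 - (lsum a l + t * seg_dir l a p)).

Section Segment.
Variables (l : list nat) (mu a p : nat -> R).
Hypothesis Hp : forall w, In w l -> 0 <= p w.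
Hypothesis Ha : forall w, In w l -> 0 < a w.
Hypothesis Hsp : lsum p l <= 1.
Hypothesis Hsa : lsum a l < 1.
(* a is a stationary point of the vertex energy. *)
Hypothesis Hmu : forall w, In w l -> mu w = /2 * ln (a w * (1 - a w)) - ln (1 - lsum a l).

Lemma seg_interior t : 0 <= t < 1 ->
  (forall w, In w l -> 0 < seg a p t w < 1) /\ 0 < 1 - (lsum a l + t * seg_dir l a p).
Proof.
  intros Ht.
  assert (HS : 0 < 1 - (lsum a l + t * seg_dir l a p)).
  { unfold seg_dir. rewrite lsum_minus. nra. }
  assert (Hy : forall w, In w l -> 0 < seg a p t w).
  { intros w Hw. unfold seg. specialize (Ha w Hw). specialize (Hp w Hw). nra. }
  split; auto. intros w Hw. split; auto.
  assert (seg a p t w <= lsum (seg a p t) l) by (apply lsum_elem; auto; intros; left; auto).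
  rewrite lsum_seg in H. lra.
Qed.

Lemma vertex_energy_seg_smooth t : 0 <= t < 1 ->
  vertex_energy l mu (seg a p t) = energy_smooth l mu a p t.
Proof.
  intros Ht. destruct (seg_interior t Ht) as [Hy HS]. unfold vertex_energy, energy_smooth.
  rewrite lsum_seg, (xlnx_pos (1 - _)) by auto. f_equal.
  apply lsum_ext. intros w Hw. destruct (Hy w Hw). rewrite !xlnx_pos by lra. reflexivity.
Qed.

Lemma energy_smooth_derive t : 0 <= t < 1 ->
  is_derive (energy_smooth l mu a p) t (energy_slope l mu a p t).
Proof.
  intros Ht. destruct (seg_interior t Ht) as [Hy HS]. unfold energy_smooth, energy_slope.
  apply (is_derive_plus (fun s => lsum _ l)
           (fun s => - ((1 - (lsum a l + s * seg_dir l a p)) * ln (1 - (lsum a l + s * seg_dir l a p))))).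
  - apply (is_derive_lsum l (fun w s => mu w * seg a p s w - /2 * (seg a p s w * ln (seg a p s w))
                                        + /2 * ((1 - seg a p s w) * ln (1 - seg a p s w)))).
    intros w Hw. destruct (Hy w Hw). unfold seg in *.
    auto_derive; [split; [lra|split; [lra|auto]]|]. unfold Rminus. field. lra.
  - auto_derive; [lra|]. unfold Rminus. field. lra.
Qed.

Lemma energy_slope_derive t : 0 <= t < 1 ->
  is_derive (energy_slope l mu a p) t (energy_curv l a p t).
Proof.
  intros Ht. destruct (seg_interior t Ht) as [Hy HS]. unfold energy_slope, energy_curv.
  apply (is_derive_plus (fun s => lsum _ l)
           (fun s => seg_dir l a p * (ln (1 - (lsum a l + s * seg_dir l a p)) + 1))).
  - apply (is_derive_lsum l (fun w s => mu w * (p w - a w) - /2 * ((p w - a w) * (ln (seg a p s w) + 1))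
                                        - /2 * ((p w - a w) * (ln (1 - seg a p s w) + 1)))).
    intros w Hw. destruct (Hy w Hw). unfold seg in *.
    auto_derive; [split; [lra|split; [lra|auto]]|]. unfold Rminus. field. lra.
  - auto_derive; [lra|]. unfold Rminus. field. lra.
Qed.

Lemma energy_slope_0 : energy_slope l mu a p 0 = 0.
Proof.
  unfold energy_slope.
  rewrite (lsum_ext _ (fun w => (p w - a w) * (- ln (1 - lsum a l) - 1))), lsum_scalr.
  - fold (seg_dir l a p). rewrite Rmult_0_l, Rplus_0_r. ring.
  - intros w Hw. destruct (seg_interior 0 ltac:(lra)) as [Hy _]. destruct (Hy w Hw).
    unfold seg in *. rewrite Rmult_0_l, Rplus_0_r in *.
    rewrite Hmu, ln_mult by (auto || lra). field.
Qed.

Lemma energy_curv_nonpos t : 0 <= t < 1 -> energy_curv l a p t <= 0.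
Proof.
  intros Ht. destruct (seg_interior t Ht) as [Hy HS].
  assert (Hh := local_hessian l (seg a p t) (fun w => p w - a w)
                  (fun w Hw => proj1 (Hy w Hw)) ltac:(rewrite lsum_seg; lra)).
  rewrite lsum_seg in Hh. fold (seg_dir l a p) in Hh.
  unfold energy_curv.
  rewrite (lsum_ext _ (fun w => /2 * ((p w - a w) ^ 2 * (/ (1 - seg a p t w) - / seg a p t w)))),
    lsum_scal.
  - replace ((seg_dir l a p) ^ 2 / (1 - (lsum a l + t * seg_dir l a p)))
      with (/2 * (2 * seg_dir l a p ^ 2 / (1 - (lsum a l + t * seg_dir l a p)))) by (field; lra).
    lra.
  - intros w Hw. destruct (Hy w Hw). field. lra.
Qed.

Lemma energy_slope_nonpos t : 0 <= t < 1 -> energy_slope l mu a p t <= 0.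
Proof.
  intros Ht. destruct (Req_dec t 0) as [->|Ht0]; [rewrite energy_slope_0; lra|].
  destruct (MVT_gen (energy_slope l mu a p) 0 t (energy_curv l a p)) as [c [Hc E]];
    rewrite ?Rmin_left, ?Rmax_right in * by lra.
  - intros s Hs. apply energy_slope_derive; lra.
  - intros s Hs. apply continuity_pt_filterlim, (ex_derive_continuous (energy_slope l mu a p)).
    eexists. apply energy_slope_derive; lra.
  - rewrite energy_slope_0 in E.
    assert (energy_curv l a p c <= 0) by (apply energy_curv_nonpos; lra). nra.
Qed.

(* The mean value theorem is applied on [0,1]; the derivative is only
   needed on the open interval, while continuity at t = 1 (where p may
   lie on the boundary) comes from continuity of t ln t. *)
Lemma vertex_energy_max : vertex_energy l mu p <= vertex_energy l mu a.
Proof.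
  rewrite (vertex_energy_ext l mu p (seg a p 1)) by (intros; unfold seg; ring).
  rewrite (vertex_energy_ext l mu a (seg a p 0)) by (intros; unfold seg; ring).
  destruct (MVT_gen (fun t => vertex_energy l mu (seg a p t)) 0 1
              (fun c => if Rlt_dec c 1 then energy_slope l mu a p c else 0)) as [c [Hc E]];
    rewrite ?Rmin_left, ?Rmax_right in * by lra.
  - intros s Hs. destruct (Rlt_dec s 1) as [_|]; [|lra].
    apply (is_derive_ext_loc (energy_smooth l mu a p)); [|apply energy_smooth_derive; lra].
    assert (He : 0 < Rmin s (1 - s)) by (apply Rmin_pos; lra).
    exists (mkposreal _ He). intros y Hy. change (Rabs (y - s) < Rmin s (1 - s)) in Hy.
    apply Rabs_def2 in Hy. pose proof (Rmin_l s (1 - s)). pose proof (Rmin_r s (1 - s)).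
    symmetry; apply vertex_energy_seg_smooth; lra.
  - intros s _. apply continuity_pt_filterlim, vertex_energy_seg_continuous.
  - destruct (Rlt_dec c 1); [|lra].
    assert (energy_slope l mu a p c <= 0) by (apply energy_slope_nonpos; lra). nra.
Qed.
End Segment.

Section Graph.
Variables (n : nat) (adj : nat -> nat -> bool).
Hypothesis Hg : simple_graph n adj.

Lemma in_nbrs v w : In w (nbrs n adj v) <-> (w < n)%nat /\ adj v w = true.
Proof. unfold nbrs. rewrite filter_In, in_seq. split; intros [H1 H2]; split; auto; lia. Qed.

Lemma nbrs_nodup v : NoDup (nbrs n adj v).
Proof. unfold nbrs. apply NoDup_filter, seq_NoDup. Qed.

Lemma in_nbrs_sym v w : In w (nbrs n adj v) -> (v < n)%nat -> In v (nbrs n adj w).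
Proof.
  intros Hw Hv. apply in_nbrs in Hw as [_ Hvw]. apply in_nbrs.
  destruct Hg as [Hs _]. rewrite Hs. auto.
Qed.

Lemma nbr_sum_flip (F : nat -> nat -> R) :
  lsum (fun v => lsum (fun w => F v w) (nbrs n adj v)) (seq 0 n) =
  lsum (fun v => lsum (fun w => F w v) (nbrs n adj v)) (seq 0 n).
Proof.
  unfold nbrs.
  rewrite (lsum_ext _ (fun v => lsum (fun w => if adj v w then F v w else 0) (seq 0 n)))
    by (intros; apply lsum_filter).
  rewrite (lsum_ext (fun v => lsum (fun w => F w v) _)
                    (fun v => lsum (fun w => if adj v w then F w v else 0) (seq 0 n)))
    by (intros; apply lsum_filter).
  rewrite lsum_swap. apply lsum_ext. intros v _. apply lsum_ext. intros w _.
  destruct Hg as [Hs _]. rewrite Hs. reflexivity.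
Qed.

Definition half_edge (x : nat -> nat -> R) (u v : nat) : R :=
  if andb (Nat.ltb u v) (adj u v) then x u v else 0.

(* A directed edge (v, w) meets its undirected edge in exactly one order. *)
Lemma xe_half_edges x v w :
  (if adj v w then xe x v w else 0) = half_edge x v w + half_edge x w v.
Proof.
  unfold half_edge, xe. destruct Hg as [Hs Hi]. rewrite (Hs w v).
  destruct (adj v w) eqn:E; [|rewrite !Bool.andb_false_r; ring].
  destruct (Nat.ltb_spec v w); destruct (Nat.ltb_spec w v); simpl; try lia.
  - rewrite Nat.min_l, Nat.max_r by lia. ring.
  - rewrite Nat.min_r, Nat.max_l by lia. ring.
  - assert (v = w) by lia. subst. rewrite Hi in E. discriminate.
Qed.

(* Each undirected edge is seen twice from its endpoints. *)
Lemma edge_sum_halves (x : nat -> nat -> R) :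
  lsum (fun e => x (fst e) (snd e)) (edges n adj) =
  /2 * lsum (fun v => lsum (fun w => xe x v w) (nbrs n adj v)) (seq 0 n).
Proof.
  unfold edges. rewrite lsum_flat_map.
  rewrite (lsum_ext _ (fun u => lsum (fun v => half_edge x u v) (seq 0 n)))
    by (intros; unfold half_edge; rewrite lsum_map, lsum_filter; reflexivity).
  unfold nbrs.
  rewrite (lsum_ext (fun v => lsum _ (filter _ _))
             (fun v => lsum (fun w => half_edge x v w) (seq 0 n)
                       + lsum (fun w => half_edge x w v) (seq 0 n))).
  - rewrite lsum_plus, (lsum_swap (fun v w => half_edge x w v)). field.
  - intros v _. rewrite lsum_filter, <- lsum_plus.
    apply lsum_ext. intros w _. apply xe_half_edges.
Qed.

Lemma xe_sym x v w : xe x v w = xe x w v.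
Proof. unfold xe. rewrite Nat.min_comm, Nat.max_comm. reflexivity. Qed.

Lemma edges_adj e :
  In e (edges n adj) -> (fst e < n)%nat /\ (snd e < n)%nat /\ adj (fst e) (snd e) = true.
Proof.
  unfold edges. intros H. apply in_flat_map in H as [u [Hu H]].
  apply in_map_iff in H as [v [<- Hv]]. apply filter_In in Hv as [Hv Hb].
  apply Bool.andb_true_iff in Hb as [_ Hb]. apply in_seq in Hu. apply in_seq in Hv.
  simpl. repeat split; auto; lia.
Qed.

Lemma edges_of_nbr v w : (v < n)%nat -> In w (nbrs n adj v) ->
  In (Nat.min v w, Nat.max v w) (edges n adj).
Proof.
  intros Hv Hw. apply in_nbrs in Hw as [Hwn Hvw].
  assert (Hne : v <> w) by (intros ->; destruct Hg as [_ Hi]; congruence).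
  unfold edges. apply in_flat_map. exists (Nat.min v w). split; [apply in_seq; lia|].
  apply in_map_iff. exists (Nat.max v w). split; auto. apply filter_In.
  split; [apply in_seq; lia|]. apply Bool.andb_true_iff. split; [apply Nat.ltb_lt; lia|].
  destruct (Nat.le_ge_cases v w).
  - rewrite Nat.min_l, Nat.max_r by lia. auto.
  - rewrite Nat.min_r, Nat.max_l by lia. destruct Hg as [Hs _]. rewrite Hs. auto.
Qed.
End Graph.

Lemma cv_nonneg (u : nat -> R) l : Un_cv u l -> (forall k, 0 <= u k) -> 0 <= l.
Proof.
  intros Hc Hu. destruct (Rle_dec 0 l) as [|Hl]; auto.
  destruct (Hc (- l) ltac:(lra)) as [N HN]. specialize (HN N (le_n _)).
  unfold R_dist in HN. apply Rabs_def2 in HN. specialize (Hu N). lra.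
Qed.

Lemma cv_shift (u : nat -> R) l : Un_cv u l -> Un_cv (fun k => u (S k)) l.
Proof. intros H eps He. destruct (H eps He) as [N HN]. exists N. intros k Hk. apply HN. lia. Qed.

Lemma cv_lsum (l : list nat) (F : nat -> nat -> R) (L : nat -> R) :
  (forall w, In w l -> Un_cv (fun k => F w k) (L w)) ->
  Un_cv (fun k => lsum (fun w => F w k) l) (lsum L l).
Proof.
  induction l as [|a l IH]; intros H.
  - intros eps He. exists O. intros. unfold R_dist. rewrite !lsum_nil, Rminus_0_r, Rabs_R0. lra.
  - apply (CV_plus (fun k => F a k) (fun k => lsum (fun w => F w k) l));
      [apply H; simpl; auto|apply IH; intros; apply H; simpl; auto].
Qed.

Definition bp_update (n : nat) (adj : nat -> nat -> bool) (z : R) (Y : nat -> nat -> R)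
    (u v : nat) : R :=
  z / (1 + lsum (fun w => Y w u) (filter (fun w => negb (Nat.eqb w v)) (nbrs n adj u))).

Section LABPLimit.
Variables (n : nat) (adj : nat -> nat -> bool) (z : R) (Y : nat -> nat -> R).
Hypothesis Hg : simple_graph n adj.
Hypothesis Hz : 0 < z.
Hypothesis HY : forall u v, (u < n)%nat -> (v < n)%nat -> adj u v = true ->
  Un_cv (fun t => labp n adj z t u v) (Y u v).

Lemma labp_nonneg t u v : 0 <= labp n adj z t u v.
Proof.
  revert u v. induction t as [|t IH]; intros u v; simpl; [lra|].
  apply Rlt_le, Rdiv_lt_0_compat; auto.
  assert (0 <= lsum (fun w => labp n adj z t w u)
                (filter (fun w => negb (w =? v)%nat) (nbrs n adj u))) by (apply lsum_nonneg; auto).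
  lra.
Qed.

Lemma labp_limit_nonneg u v : (u < n)%nat -> (v < n)%nat -> adj u v = true -> 0 <= Y u v.
Proof. intros. eapply cv_nonneg; [apply HY; auto|]. intros; apply labp_nonneg. Qed.

(* Passing to the limit in m^{t+1} = update(m^t), by continuity. *)
Lemma labp_limit_fixed u v : (u < n)%nat -> (v < n)%nat -> adj u v = true ->
  Y u v = bp_update n adj z Y u v.
Proof.
  intros Hu Hv Ha. unfold bp_update.
  set (F := filter (fun w => negb (w =? v)%nat) (nbrs n adj u)).
  assert (HF : forall w, In w F -> (w < n)%nat /\ adj w u = true).
  { intros w Hw. apply filter_In in Hw as [Hw _]. apply in_nbrs in Hw as [Hw Haw].
    destruct Hg as [Hs _]. rewrite Hs. auto. }
  assert (Hnn : 0 <= lsum (fun w => Y w u) F).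
  { apply lsum_nonneg. intros w Hw. destruct (HF w Hw). apply labp_limit_nonneg; auto. }
  assert (Hc : Un_cv (fun k => lsum (fun w => labp n adj z k w u) F) (lsum (fun w => Y w u) F)).
  { apply (cv_lsum F (fun w k => labp n adj z k w u)).
    intros w Hw. destruct (HF w Hw). apply HY; auto. }
  assert (Hcont : continuity_pt (fun s => z / (1 + s)) (lsum (fun w => Y w u) F)).
  { apply derivable_continuous_pt, derivable_pt_div; [apply derivable_pt_const| |lra].
    apply derivable_pt_plus; [apply derivable_pt_const|apply derivable_pt_id]. }
  exact (UL_sequence _ _ _ (cv_shift _ _ (HY u v Hu Hv Ha)) (continuity_seq _ _ _ Hcont Hc)).
Qed.

Lemma labp_limit_pos u v : (u < n)%nat -> (v < n)%nat -> adj u v = true -> 0 < Y u v.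
Proof.
  intros Hu Hv Ha. rewrite labp_limit_fixed by auto. unfold bp_update.
  apply Rdiv_lt_0_compat; auto.
  assert (0 <= lsum (fun w => Y w u) (filter (fun w => negb (w =? v)%nat) (nbrs n adj u))); [|lra].
  apply lsum_nonneg. intros w Hw. apply filter_In in Hw as [Hw _].
  apply in_nbrs in Hw as [Hw Haw]. apply labp_limit_nonneg; auto.
  destruct Hg as [Hs _]. rewrite Hs. auto.
Qed.
End LABPLimit.

Section BPFixedPoint.
Variables (n : nat) (adj : nat -> nat -> bool) (z : R) (Y : nat -> nat -> R).
Hypothesis Hg : simple_graph n adj.
Hypothesis Hpos : forall u v, (u < n)%nat -> (v < n)%nat -> adj u v = true -> 0 < Y u v.
Hypothesis Hfix : forall u v, (u < n)%nat -> (v < n)%nat -> adj u v = true ->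
  Y u v = bp_update n adj z Y u v.

Let N v := nbrs n adj v.
Let xbp := xz_of Y z.
Let den v := 1 + lsum (fun w => Y w v) (N v).

Lemma nbr_adj v w : In w (N v) -> (w < n)%nat /\ adj v w = true /\ adj w v = true.
Proof.
  intros H. apply in_nbrs in H as [Hw Hvw]. destruct Hg as [Hs _].
  rewrite (Hs w v). auto.
Qed.

Lemma incoming_pos v w : (v < n)%nat -> In w (N v) -> 0 < Y w v.
Proof. intros Hv Hw. destruct (nbr_adj v w Hw) as [? [? ?]]. auto. Qed.

Lemma den_ge1 v : (v < n)%nat -> 1 <= den v.
Proof.
  intros Hv. unfold den.
  assert (0 <= lsum (fun w => Y w v) (N v)); [|lra].
  apply lsum_nonneg. intros w Hw. left. apply incoming_pos; auto.
Qed.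

Lemma incoming_lt_den v w : (v < n)%nat -> In w (N v) -> Y w v < den v.
Proof.
  intros Hv Hw. unfold den.
  assert (Y w v <= lsum (fun u => Y u v) (N v)); [|lra].
  apply (lsum_elem (fun u => Y u v)); auto. intros u Hu. left. apply incoming_pos; auto.
Qed.

Lemma Y_mul_den v w : (v < n)%nat -> In w (N v) -> Y v w * den v = z + Y v w * Y w v.
Proof.
  intros Hv Hw. destruct (nbr_adj v w Hw) as [Hwn [H1 H2]].
  pose proof (Hfix v w Hv Hwn H1) as E. unfold bp_update in E.
  rewrite (lsum_remove _ _ _ (nbrs_nodup n adj v) Hw) in E. fold (N v) in E.
  pose proof (incoming_lt_den v w Hv Hw).
  replace (1 + (lsum (fun u => Y u v) (N v) - Y w v)) with (den v - Y w v) in E by (unfold den; ring).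
  rewrite E. field. lra.
Qed.

Lemma xe_xbp v w : xe xbp v w = xbp v w.
Proof.
  unfold xe. destruct (Nat.le_ge_cases v w).
  - rewrite Nat.min_l, Nat.max_r by lia. reflexivity.
  - rewrite Nat.min_r, Nat.max_l by lia. unfold xbp, xz_of. rewrite (Rmult_comm (Y v w)). reflexivity.
Qed.

Lemma xbp_at_vertex v w : (v < n)%nat -> In w (N v) -> xe xbp v w = Y w v / den v.
Proof.
  intros Hv Hw. rewrite xe_xbp. unfold xbp, xz_of. rewrite <- Y_mul_den by auto.
  destruct (nbr_adj v w Hw) as [Hwn [H1 _]].
  pose proof (Hpos v w Hv Hwn H1). pose proof (den_ge1 v Hv). field. lra.
Qed.

Lemma xbp_vertex_sum v : (v < n)%nat -> lsum (fun w => xe xbp v w) (N v) = (den v - 1) / den v.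
Proof.
  intros Hv. pose proof (den_ge1 v Hv).
  rewrite (lsum_ext _ (fun w => Y w v * / den v)), lsum_scalr
    by (intros; rewrite xbp_at_vertex by auto; reflexivity).
  unfold Rdiv. f_equal. unfold den. ring.
Qed.

Lemma xbp_feasible : FM n adj xbp.
Proof.
  split.
  - intros e He. destruct (edges_adj n adj e He) as [H1 [H2 H3]].
    assert (Hnb : In (snd e) (N (fst e))) by (apply in_nbrs; auto).
    pose proof (den_ge1 (fst e) H1).
    rewrite <- xe_xbp, xbp_at_vertex by auto.
    left. apply Rdiv_lt_0_compat; [apply incoming_pos; auto|lra].
  - intros v Hv. fold (N v). rewrite xbp_vertex_sum by auto.
    pose proof (den_ge1 v Hv).
    apply (Rmult_le_reg_r (den v)); [lra|].
    unfold Rdiv. rewrite Rmult_assoc, Rinv_l by lra. lra.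
Qed.

(* The multiplier making x(z) stationary for the vertex energy at v. *)
Definition multiplier v w : R :=
  /2 * ln (xe xbp v w * (1 - xe xbp v w)) - ln (1 - lsum (fun u => xe xbp v u) (N v)).

(* The two multipliers of an edge add up to ln z: with A = x_{vw},
   one has A (1 - A) D_v D_w = z. *)
Lemma multiplier_pair v w : (v < n)%nat -> In w (N v) -> multiplier v w + multiplier w v = ln z.
Proof.
  intros Hv Hw. destruct (nbr_adj v w Hw) as [Hwn [H1 H2]].
  assert (Hv' : In v (N w)) by (apply in_nbrs_sym; auto).
  pose proof (Hpos v w Hv Hwn H1). pose proof (Hpos w v Hwn Hv H2).
  pose proof (den_ge1 v Hv). pose proof (den_ge1 w Hwn).
  pose proof (Y_mul_den v w Hv Hw) as E1. pose proof (Y_mul_den w v Hwn Hv') as E2.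
  unfold multiplier. rewrite (xe_sym xbp w v), !xbp_vertex_sum, (xbp_at_vertex v w) by auto.
  replace (1 - (den v - 1) / den v) with (/ den v) by (field; lra).
  replace (1 - (den w - 1) / den w) with (/ den w) by (field; lra).
  rewrite !ln_Rinv by lra.
  set (A := Y w v / den v).
  assert (HA : 0 < A < 1).
  { unfold A. split; [apply Rdiv_lt_0_compat; lra|].
    apply (Rmult_lt_reg_r (den v)); [lra|].
    unfold Rdiv. rewrite Rmult_assoc, Rinv_l by lra.
    pose proof (incoming_lt_den v w Hv Hw). lra. }
  assert (Ez : A * (1 - A) * den v * den w = z).
  { assert (Esym : Y w v * den w = Y v w * den v) by (rewrite E1, E2; ring).
    transitivity (Y w v * den w * (den v - Y w v) / den v); [unfold A; field; lra|].
    rewrite Esym. field_simplify; [|lra]. lra. }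
  assert (HA1 : 0 < A * (1 - A)) by (apply Rmult_lt_0_compat; lra).
  assert (HA2 : 0 < A * (1 - A) * den v) by (apply Rmult_lt_0_compat; lra).
  rewrite <- Ez, !ln_mult by lra. field.
Qed.

(* The weights mu_{vw} - (ln z)/2 are antisymmetric, so their weighted
   sum over directed edges vanishes. *)
Lemma centred_multiplier_sum x :
  lsum (fun v => lsum (fun w => (multiplier v w - /2 * ln z) * xe x v w) (N v)) (seq 0 n) = 0.
Proof.
  set (S := lsum (fun v => lsum (fun w => (multiplier v w - /2 * ln z) * xe x v w) (N v)) (seq 0 n)).
  enough (S = -1 * S) by lra.
  unfold S at 1. unfold N. rewrite nbr_sum_flip by auto.
  unfold S. rewrite <- lsum_scal. apply lsum_ext. intros v Hv. apply in_seq in Hv.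
  rewrite <- lsum_scal. apply lsum_ext. intros w Hw.
  pose proof (multiplier_pair v w ltac:(lia) Hw).
  replace (multiplier w v) with (ln z - multiplier v w) by lra.
  rewrite (xe_sym x w v). field.
Qed.

Lemma PhiB_vertex_decomposition x :
  PhiB n adj x z = lsum (fun v => vertex_energy (N v) (multiplier v) (fun w => xe x v w)) (seq 0 n).
Proof.
  unfold PhiB, SB. rewrite edge_sum_halves by auto.
  rewrite (lsum_ext (fun v => vertex_energy (N v) (multiplier v) (fun w => xe x v w)) (fun v =>
      (lsum (fun w => (multiplier v w - /2 * ln z) * xe x v w) (N v)
       + /2 * ln z * lsum (fun w => xe x v w) (N v))
      + /2 * (lsum (fun w => - xlnx (xe x v w) + xlnx (1 - xe x v w)) (N v)
              - 2 * xlnx (1 - lsum (fun w => xe x v w) (N v))))).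
  - rewrite !lsum_plus, centred_multiplier_sum, !lsum_scal. unfold N. field.
  - intros v _. unfold vertex_energy.
    rewrite (lsum_ext (fun w => multiplier v w * xe x v w - /2 * xlnx (xe x v w)
                                + /2 * xlnx (1 - xe x v w))
                      (fun w => ((multiplier v w - /2 * ln z) * xe x v w + /2 * ln z * xe x v w)
                                  + /2 * (- xlnx (xe x v w) + xlnx (1 - xe x v w))))
      by (intros; field).
    rewrite lsum_plus, lsum_plus, (lsum_scal (fun w => xe x v w)),
      (lsum_scal (fun w => - xlnx (xe x v w) + xlnx (1 - xe x v w))).
    field.
Qed.

Lemma vertex_energy_le_xbp x v : FM n adj x -> (v < n)%nat ->
  vertex_energy (N v) (multiplier v) (fun w => xe x v w)
  <= vertex_energy (N v) (multiplier v) (fun w => xe xbp v w).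
Proof.
  intros [Hx1 Hx2] Hv. pose proof (den_ge1 v Hv).
  apply vertex_energy_max.
  - intros w Hw. apply (Hx1 (Nat.min v w, Nat.max v w)), edges_of_nbr; auto.
  - intros w Hw. rewrite xbp_at_vertex by auto.
    apply Rdiv_lt_0_compat; [apply incoming_pos; auto|lra].
  - apply Hx2; auto.
  - rewrite xbp_vertex_sum by auto.
    apply (Rmult_lt_reg_r (den v)); [lra|].
    unfold Rdiv. rewrite Rmult_assoc, Rinv_l by lra. lra.
  - reflexivity.
Qed.
End BPFixedPoint.

Theorem proposition5 (n : nat) (adj : nat -> nat -> bool) (z : R)
  (Y : nat -> nat -> R) :
  simple_graph n adj ->
  0 < z ->
  (forall u v, (u < n)%nat -> (v < n)%nat -> adj u v = true ->
     Un_cv (fun t => labp n adj z t u v) (Y u v)) ->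
  is_lub (fun r => exists x, FM n adj x /\ r = PhiB n adj x z)
         (PhiB n adj (xz_of Y z) z).
Proof.
  intros Hg Hz HY.
  pose proof (labp_limit_pos n adj z Y Hg Hz HY) as Hpos.
  pose proof (labp_limit_fixed n adj z Y Hg Hz HY) as Hfix.
  split.
  - intros r [x [Hx ->]].
    rewrite !(PhiB_vertex_decomposition n adj z Y Hg Hpos Hfix).
    apply lsum_le. intros v Hv. apply in_seq in Hv.
    apply (vertex_energy_le_xbp n adj z Y Hg Hpos Hfix); [exact Hx|lia].
  - intros b Hb. apply Hb. exists (xz_of Y z).
    split; [exact (xbp_feasible n adj z Y Hg Hpos Hfix)|reflexivity].
Qed.
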